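(* Let $\mathcal{K}=\langle\mathcal{O},\mathcal{P}\rangle$ be a hybrid knowledge base with function symbols, and let $\mathcal{I}=\langle I_T,I_F\rangle$ and $\mathcal{I}'=\langle I_T',I_F'\rangle$ be 3-valued interpretations for $\mathcal{K}$ with $\mathcal{I}\le\mathcal{I}'$. Then (1) for each $Tr\subseteq\mathrm{KA}(\mathcal{K})$, $T^{\mathcal{K}}_{\mathcal{I}}(Tr)\subseteq T^{\mathcal{K}}_{\mathcal{I}'}(Tr)$, and (2) for each $Fa\subseteq\mathrm{KA}(\mathcal{K})$, $F^{\mathcal{K}}_{\mathcal{I}}(Fa)\subseteq F^{\mathcal{K}}_{\mathcal{I}'}(Fa)$.
   Context: A hybrid knowledge base with function symbols (HKBFS) is a pair $\mathcal{K}=\langle\mathcal{O},\mathcal{P}\rangle$ where $\mathcal{O}$ is a set of description logic axioms (e.g. in $\mathcal{ALC}$) and $\mathcal{P}$ is a finite set of normal logic programming rules $h\leftarrow a_1,\dots,a_n,\mathit{not}\,b_1,\dots,\mathit{not}\,b_r$ whose terms may contain function symbols. The grounding of $\mathcal{P}$ replaces variables of each rule by ground terms (built from the constants and function symbols of $\mathcal{K}$) in all possible ways. $\mathrm{KA}(\mathcal{K})$ is the set of ground atoms occurring in the grounding of $\mathcal{P}$. $\pi(\mathcal{O})$ is the standard first-order translation of the DL axioms, and $O_{\mathcal{K},S}=\{\pi(\mathcal{O})\}\cup S$ for $S\subseteq\mathrm{KA}(\mathcal{K})$; $\models$ is first-order entailment. A 3-valued interpretation for $\mathcal{K}$ is a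 pair $\langle I_T,I_F\rangle$ of disjoint subsets of $\mathrm{KA}(\mathcal{K})$; $a$ is true in it if $a\in I_T$, false if $a\in I_F$, undefined otherwise; $\langle I_T,I_F\rangle\le\langle I_T',I_F'\rangle$ iff $I_T\subseteq I_T'$ and $I_F\subseteq I_F'$. For $\mathcal{I}=\langle I_T,I_F\rangle$: $T^{\mathcal{K}}_{\mathcal{I}}(Tr)=\{a\in\mathrm{KA}(\mathcal{K})\mid$ there is a clause $a\leftarrow a_1,\dots,a_n,\mathit{not}\,b_1,\dots,\mathit{not}\,b_r$ in the grounding of $\mathcal{P}$ such that each $a_i$ is true in $\mathcal{I}$ or $a_i\in Tr$, and each $b_j$ is false in $\mathcal{I}\}\cup\{a\in\mathrm{KA}(\mathcal{K})\mid O_{\mathcal{K},I_T\cup Tr}\models a\}$; $F^{\mathcal{K}}_{\mathcal{I}}(Fa)=\{a\in\mathrm{KA}(\mathcal{K})\mid O_{\mathcal{K},I_T}\models\neg a$, or for every clause $a\leftarrow a_1,\dots,a_n,\mathit{not}\,b_1,\dots,\mathit{not}\,b_r$ in the grounding of $\mathcal{P}$ there is some $i$ with $a_i$ false in $\mathcal{I}$ or $a_i\in Fa$, or some $j$ with $b_j$ true in $\mathcal{I}\}\cap\{a\in\mathrm{KA}(\mathcal{K})\mid O_{\mathcal{K},\mathrm{KA}(\mathcal{K})\setminus(I_F\cup Fa)}\not\models a\}$. *)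

From Stdlib Require Import List Arith.
Import ListNotations.
Set Implicit Arguments.

Section HKBFS.

(* Signature of K: function symbols (constants = arity 0) and predicate symbols
   (DL concept names / role names are predicates of arity 1 / 2). *)
Variables (Fn Pr : Type).

Inductive term : Type :=
| Var : nat -> term
| App : Fn -> list term -> term.

Definition atom : Type := (Pr * list term)%type.

Inductive formula : Type :=
| FTrue : formula
| FFalse : formula
| FAtom : Pr -> list term -> formula
| FNot : formula -> formula
| FAnd : formula -> formula -> formula
| FOr : formula -> formula -> formula
| FImp : formula -> formula -> formula
| FAll : nat -> formula -> formula
| FEx : nat -> formula -> formula.

Definition fatom (a : atom) : formula := FAtom (fst a) (snd a).

Record structure : Type := {
  dom : Type;
  dom_inh : dom;
  fint : Fn -> list dom -> dom;
  pint : Pr -> list dom -> Prop }.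

Fixpoint teval (M : structure) (v : nat -> dom M) (t : term) : dom M :=
  match t with
  | Var x => v x
  | App f ts => fint M f (map (teval M v) ts)
  end.

Definition upd (M : structure) (v : nat -> dom M) (x : nat) (d : dom M) :
  nat -> dom M := fun y => if Nat.eqb y x then d else v y.

Fixpoint holds (M : structure) (v : nat -> dom M) (phi : formula) : Prop :=
  match phi with
  | FTrue => True
  | FFalse => False
  | FAtom p ts => pint M p (map (teval M v) ts)
  | FNot f => ~ holds M v f
  | FAnd f g => holds M v f /\ holds M v g
  | FOr f g => holds M v f \/ holds M v g
  | FImp f g => holds M v f -> holds M v g
  | FAll x f => forall d, holds M (upd M v x d) f
  | FEx x f => exists d, holds M (upd M v x d) f
  end.

Definition entails (Gamma : formula -> Prop) (phi : formula) : Prop :=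
  forall M : structure,
    (forall psi, Gamma psi -> forall v, holds M v psi) ->
    forall v, holds M v phi.

Inductive concept : Type :=
| CTop : concept
| CBot : concept
| CName : Pr -> concept
| CNeg : concept -> concept
| CAnd : concept -> concept -> concept
| COr : concept -> concept -> concept
| CEx : Pr -> concept -> concept
| CAll : Pr -> concept -> concept.

Inductive axiom : Type :=
| GCI : concept -> concept -> axiom
| CAssert : concept -> Fn -> axiom
| RAssert : Pr -> Fn -> Fn -> axiom.

(* pi_C(t) with fresh variables numbered from n on *)
Fixpoint pi_concept (C : concept) (t : term) (n : nat) : formula :=
  match C with
  | CTop => FTrue
  | CBot => FFalse
  | CName A => FAtom A [t]
  | CNeg D => FNot (pi_concept D t n)
  | CAnd D E => FAnd (pi_concept D t n) (pi_concept E t n)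
  | COr D E => FOr (pi_concept D t n) (pi_concept E t n)
  | CEx R D => FEx n (FAnd (FAtom R [t; Var n]) (pi_concept D (Var n) (S n)))
  | CAll R D => FAll n (FImp (FAtom R [t; Var n]) (pi_concept D (Var n) (S n)))
  end.

Definition pi_axiom (ax : axiom) : formula :=
  match ax with
  | GCI C D => FAll 0 (FImp (pi_concept C (Var 0) 1) (pi_concept D (Var 0) 1))
  | CAssert C a => pi_concept C (App a []) 0
  | RAssert R a b => FAtom R [App a []; App b []]
  end.

Record rule : Type := {
  rhead : atom;
  rpos : list atom;
  rneg : list atom }.

Record hkbfs : Type := {
  arity : Fn -> nat;
  onto : axiom -> Prop;
  prog : list rule }.

Variable K : hkbfs.

Fixpoint ground_term (t : term) : Prop :=
  match t with
  | Var _ => False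
  | App f ts => length ts = arity K f /\
      (fix all (l : list term) : Prop :=
         match l with [] => True | u :: l' => ground_term u /\ all l' end) ts
  end.

Fixpoint subst (s : nat -> term) (t : term) : term :=
  match t with
  | Var x => s x
  | App f ts => App f (map (subst s) ts)
  end.

Definition subst_atom (s : nat -> term) (a : atom) : atom :=
  (fst a, map (subst s) (snd a)).

Definition subst_rule (s : nat -> term) (r : rule) : rule :=
  {| rhead := subst_atom s (rhead r);
     rpos := map (subst_atom s) (rpos r);
     rneg := map (subst_atom s) (rneg r) |}.

Definition in_grounding (c : rule) : Prop :=
  exists r s, In r (prog K) /\ (forall x, ground_term (s x)) /\ c = subst_rule s r.

Definition KA (a : atom) : Prop :=
  exists c, in_grounding c /\ (rhead c = a \/ In a (rpos c) \/ In a (rneg c)).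

Definition OKS (S : atom -> Prop) (phi : formula) : Prop :=
  (exists ax, onto K ax /\ phi = pi_axiom ax) \/ (exists a, S a /\ phi = fatom a).

Record interp : Type := { IT : atom -> Prop; IF : atom -> Prop }.

Definition is_interp (I : interp) : Prop :=
  (forall a, IT I a -> KA a) /\ (forall a, IF I a -> KA a) /\
  (forall a, IT I a -> IF I a -> False).

Definition interp_le (I J : interp) : Prop :=
  (forall a, IT I a -> IT J a) /\ (forall a, IF I a -> IF J a).

Definition subset (X Y : atom -> Prop) : Prop := forall a, X a -> Y a.

Definition Top (I : interp) (Tr : atom -> Prop) (a : atom) : Prop :=
  (KA a /\ exists c, in_grounding c /\ rhead c = a /\
     (forall ai, In ai (rpos c) -> IT I ai \/ Tr ai) /\
     (forall bj, In bj (rneg c) -> IF I bj))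
  \/ (KA a /\ entails (OKS (fun b => IT I b \/ Tr b)) (fatom a)).

Definition Fop (I : interp) (Fa : atom -> Prop) (a : atom) : Prop :=
  (KA a /\
    (entails (OKS (IT I)) (FNot (fatom a)) \/
     forall c, in_grounding c -> rhead c = a ->
       (exists ai, In ai (rpos c) /\ (IF I ai \/ Fa ai)) \/
       (exists bj, In bj (rneg c) /\ IT I bj)))
  /\
  (KA a /\ ~ entails (OKS (fun b => KA b /\ ~ (IF I b \/ Fa b))) (fatom a)).

End HKBFS.


(* Both operators only ever test facts of the form "a is true/false in I" positively, and
   first-order entailment is monotone in its premises. The one antitone ingredient is the
   set KA(K) \ (I_F u Fa) in the second conjunct of F: it shrinks as I_F grows, so a
   non-entailment from it survives the passage from I to I'. *)

Section Monotonicity.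

Variables (Fn Pr : Type) (K : hkbfs Fn Pr).

Lemma entails_weaken (G G' : formula Fn Pr -> Prop) (phi : formula Fn Pr) :
  (forall psi, G psi -> G' psi) -> entails G phi -> entails G' phi.
Proof. intros HG E M HM. apply E. intros psi Hpsi. apply HM, HG, Hpsi. Qed.

Lemma OKS_mono (S S' : atom Fn Pr -> Prop) :
  subset S S' -> forall psi, OKS K S psi -> OKS K S' psi.
Proof. intros HS psi [Honto | [a [Ha ->]]]; [left | right; exists a]; auto. Qed.

Lemma entails_OKS_mono (S S' : atom Fn Pr -> Prop) (phi : formula Fn Pr) :
  subset S S' -> entails (OKS K S) phi -> entails (OKS K S') phi.
Proof. intros HS. apply entails_weaken, OKS_mono, HS. Qed.

Lemma not_entails_OKS_anti (S S' : atom Fn Pr -> Prop) (phi : formula Fn Pr) :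
  subset S' S -> ~ entails (OKS K S) phi -> ~ entails (OKS K S') phi.
Proof. intros HS NE E. apply NE. revert E. apply entails_OKS_mono, HS. Qed.

Variables (I I' : interp Fn Pr).
Hypothesis HII' : interp_le I I'.

Lemma Top_mono (Tr : atom Fn Pr -> Prop) : subset (Top K I Tr) (Top K I' Tr).
Proof.
  destruct HII' as [HT HF].
  intros a [[Ka [c [Hc [Hhead [Hpos Hneg]]]]] | [Ka E]].
  - left. split; [exact Ka |]. exists c. repeat split; auto.
    intros ai Hai. destruct (Hpos ai Hai); auto.
  - right. split; [exact Ka |]. revert E. apply entails_OKS_mono.
    intros b [Hb | Hb]; auto.
Qed.

Lemma Fop_mono (Fa : atom Fn Pr -> Prop) : subset (Fop K I Fa) (Fop K I' Fa).
Proof.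
  destruct HII' as [HT HF].
  intros a [[Ka Hfalse] [_ Hnot_entailed]]. split; split; try exact Ka.
  - destruct Hfalse as [E | Hunfounded].
    + left. revert E. apply entails_OKS_mono; exact HT.
    + right. intros c Hc Hhead.
      destruct (Hunfounded c Hc Hhead) as [[ai [Hai Hf]] | [bj [Hbj Ht]]].
      * left. exists ai. destruct Hf; auto.
      * right. exists bj. auto.
  - revert Hnot_entailed. apply not_entails_OKS_anti.
    intros b [Kb Nb]. split; [exact Kb |]. intros [Hb | Hb]; apply Nb; auto.
Qed.

End Monotonicity.

Theorem proposition3 (Fn Pr : Type) (K : hkbfs Fn Pr) (I I' : interp Fn Pr) :
  is_interp K I -> is_interp K I' -> interp_le I I' ->
  (forall Tr : atom Fn Pr -> Prop, subset Tr (KA K) ->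
     subset (Top K I Tr) (Top K I' Tr)) /\
  (forall Fa : atom Fn Pr -> Prop, subset Fa (KA K) ->
     subset (Fop K I Fa) (Fop K I' Fa)).
Proof.
  intros _ _ HII'. split.
  - intros Tr _. apply Top_mono, HII'.
  - intros Fa _. apply Fop_mono, HII'.
Qed.
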